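(* Let $P$ be a finite poset and let $\mathcal{J}\subseteq \mathrm{Hom}(P,\mathbb{N})$ be a poset ideal. Then the letterplace ideal $L(\mathcal{J},P)$ and the co-letterplace ideal $L(P,\mathcal{J})$ in $k[x_{P\times\mathbb{N}}]$ are Alexander dual: the monomials of $L(\mathcal{J},P)$ are precisely the monomials of $k[x_{P\times\mathbb{N}}]$ having a nontrivial common divisor with every monomial of $L(P,\mathcal{J})$ (and vice versa).
   Context: $\mathbb{N}=\{0,1,2,\dots\}$. For a finite poset $P$, $\mathrm{Hom}(P,\mathbb{N})$ is the set of isotone maps $\phi:P\to\mathbb{N}$ (i.e. $p\le q\Rightarrow \phi(p)\le\phi(q)$), partially ordered by $\phi\le\psi$ iff $\phi(p)\le\psi(p)$ for all $p$. A poset ideal (resp. filter) is a down-closed (resp. up-closed) subset; $\mathcal{J}^c$ denotes the complement of $\mathcal{J}$ in $\mathrm{Hom}(P,\mathbb{N})$. The ascent of $\phi\in\mathrm{Hom}(P,\mathbb{N})$ is $\Lambda\phi=\{(p,i)\in P\times\mathbb{N} : \phi(q)\le i<\phi(p)\text{ for all } q<p\}$. A marker for $\mathcal{J}$ is a pair of a poset ideal $I\subseteq P$ and an isotone map $\alpha:I\to\mathbb{N}$ such that every isotone $\phi:P\to\mathbb{N}$ with $\phi|_I=\alpha$ lies in $\mathcal{J}$; its graph is $\Gamma\alpha=\{(p,\alpha(p)):p\in I\}$. Let $k$ be a field and $k[x_{P\times\mathbb{N}}]$ the polynomial ring in variables $x_{p,i}$, $(p,i)\in P\times\mathbb{N}$;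 for finite $T\subseteq P\times\mathbb{N}$ put $m_T=\prod_{t\in T}x_t$. The co-letterplace ideal $L(P,\mathcal{J})$ is generated by the $m_{\Gamma\alpha}$ for all markers $\alpha$ of $\mathcal{J}$; the letterplace ideal $L(\mathcal{J},P)$ is generated by the $m_{\Lambda\phi}$ for all $\phi\in\mathcal{J}^c$. *)

From HB Require Import structures.
From mathcomp Require Import all_boot all_order all_algebra.
From mathcomp Require Import finmap.
From mathcomp.multinomials Require Import monalg.
Set Implicit Arguments. Unset Strict Implicit. Unset Printing Implicit Defensive.
Import Order.TTheory GRing.Theory.
Local Open Scope ring_scope.

(* The polynomial ring k[x_{P x N}] in the (infinitely many) variables
   x_{p,i}, (p,i) in P x nat: the monoid algebra over commutative monomials. *)
Definition polyring (k : fieldType) (V : choiceType) := {malg k[{cmonom V}]}.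

Definition monomial (k : fieldType) (V : choiceType) (m : {cmonom V}) : polyring k V :=
  << m >>.

Definition var (k : fieldType) (V : choiceType) (t : V) : polyring k V :=
  << ucm t >>.

Definition ideal_gen (R : comNzRingType) (G : R -> Prop) (f : R) : Prop :=
  exists (n : nat) (r g : 'I_n -> R),
    (forall j, G (g j)) /\ f = \sum_(j < n) r j * g j.

Definition common_divisor (V : choiceType) (m1 m2 : {cmonom V}) : Prop :=
  exists t : V, (0 < m1 t)%N /\ (0 < m2 t)%N.

Section LP.
Context {disp : Order.disp_t} (P : finPOrderType disp).

Definition isotone (phi : {ffun P -> nat}) : Prop :=
  forall p q : P, (p <= q)%O -> (phi p <= phi q)%N.

Definition hom_ideal (J : {ffun P -> nat} -> Prop) : Prop :=
  (forall phi, J phi -> isotone phi) /\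
  (forall phi psi, isotone psi -> J phi -> (forall p, (psi p <= phi p)%N) -> J psi).

Definition in_ascent (phi : {ffun P -> nat}) (p : P) (i : nat) : bool :=
  [forall q : P, (q < p)%O ==> (phi q <= i)%N] && (i < phi p)%N.

Definition m_ascent (k : fieldType) (phi : {ffun P -> nat}) : polyring k (P * nat)%type :=
  \prod_(p : P) \prod_(i < phi p | in_ascent phi p i) var k (p, val i).

Definition down_closed (I : {set P}) : Prop :=
  forall p q : P, (q <= p)%O -> p \in I -> q \in I.

(* (I, alpha) is a marker for J; alpha : I -> N is represented by a function
   on P of which only the values on I matter *)
Definition marker (J : {ffun P -> nat} -> Prop) (I : {set P}) (alpha : {ffun P -> nat}) : Prop :=
  [/\ down_closed I,
      (forall p q, p \in I -> q \in I -> (p <= q)%O -> (alpha p <= alpha q)%N) &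
      (forall phi, isotone phi -> (forall p, p \in I -> phi p = alpha p) -> J phi)].

Definition m_graph (k : fieldType) (I : {set P}) (alpha : {ffun P -> nat}) :
  polyring k (P * nat)%type :=
  \prod_(p in I) var k (p, alpha p).

Definition LP_gens (k : fieldType) (J : {ffun P -> nat} -> Prop)
  (f : polyring k (P * nat)%type) : Prop :=
  exists phi, isotone phi /\ ~ J phi /\ f = m_ascent k phi.
Arguments LP_gens k J f : clear implicits.

Definition coLP_gens (k : fieldType) (J : {ffun P -> nat} -> Prop)
  (f : polyring k (P * nat)%type) : Prop :=
  exists I alpha, marker J I alpha /\ f = m_graph k I alpha.
Arguments coLP_gens k J f : clear implicits.

Definition letterplace (k : fieldType) (J : {ffun P -> nat} -> Prop) :
  polyring k (P * nat)%type -> Prop := ideal_gen (LP_gens k J).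
Definition coletterplace (k : fieldType) (J : {ffun P -> nat} -> Prop) :
  polyring k (P * nat)%type -> Prop := ideal_gen (coLP_gens k J).

End LP.
Arguments letterplace {disp P} k J.
Arguments coletterplace {disp P} k J.
Arguments monomial k {V} m.
Arguments var k {V} t.

From HB Require Import structures.
From mathcomp Require Import all_boot all_order all_algebra.
From mathcomp Require Import finmap.
From mathcomp.multinomials Require Import monalg.
From Stdlib Require Import Classical.
Set Implicit Arguments. Unset Strict Implicit. Unset Printing Implicit Defensive.
Import Order.TTheory GRing.Theory.

(* A monomial lies in L(J,P) iff its support contains the ascent of some
   isotone phi outside J, and in L(P,J) iff its support contains the graph of
   some marker; so both dualities are statements about finite subsets S of
   P x N.  Every ascent of a phi outside J meets every marker graph.
   Conversely, let psi be the greedy isotone map, psi p being the least value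
   >= psi q (q < p) satisfying a condition c p; its ascent avoids c.  With
   c = "not in S", psi lies outside J as soon as S meets every marker graph,
   and its ascent is contained in S.  With c = "in S, or beyond S", the
   restriction of psi to the points where it stays within the bound of S is a
   marker whose graph is contained in S, as soon as S meets every ascent. *)

Section MonomialIdeals.
Variables (k : fieldType) (V : choiceType).
Implicit Types (a b g m : {cmonom V}).

Definition cm_dvd g m := forall t, g t <= m t.

Lemma monomialM a b :
  (monomial k a * monomial k b)%R = monomial k (mmul a b).
Proof. by rewrite /monomial malgM_def fgmulUU mulr1. Qed.

Lemma monomial_prod (X : Type) (r : seq X) (Q : pred X) (F : X -> {cmonom V}) :
  (\prod_(x <- r | Q x) monomial k (F x))%R =
  monomial k (\big[@mmul _/@mone _]_(x <- r | Q x) F x).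
Proof.
by rewrite (big_morph (monomial k) (id1 := 1%R) (op1 := *%R)
  (fun a b => esym (monomialM a b))).
Qed.

Lemma cm_prod (X : Type) (r : seq X) (Q : pred X) (F : X -> {cmonom V}) t :
  (\big[@mmul _/@mone _]_(x <- r | Q x) F x) t = \sum_(x <- r | Q x) F x t.
Proof. exact: (big_morph (fun m : {cmonom V} => m t) (cmM t) (cm1 t)). Qed.

Lemma divcmK g m : cm_dvd g m -> mmul (divcm m g) g = m.
Proof. by move=> gm; apply/eqP/cmP => t; rewrite cmM divcmE subnK. Qed.

Section GeneratedByMonomials.
Variables (X : Type) (Q : X -> Prop) (F : X -> {cmonom V}).
Variable G : polyring k V -> Prop.
Hypothesis G_monomial : forall f, G f <-> exists2 x, Q x & f = monomial k (F x).

(* Comparing coefficients of [m] in [monomial m = \sum_j r_j g_j]: some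
   [r_j g_j] has [m] in its support, so [m] is a multiple of [g_j]. *)
Lemma ideal_gen_monomialP m :
  ideal_gen G (monomial k m) <-> exists2 x, Q x & cm_dvd (F x) m.
Proof.
split=> [[n [r [g [Gg Em]]]]|[x Qx /divcmK <-]]; last first.
  exists 1%N, (fun=> monomial k (divcm m (F x))), (fun=> monomial k (F x)).
  by split=> [_|]; [apply/G_monomial; exists x | rewrite big_ord1 monomialM].
have [/existsP [j]|] := boolP [exists j, ((r j * g j)@_m != 0)%R]; last first.
  rewrite negb_exists => /forallP r0; have := congr1 (mcoeff m) Em.
  rewrite raddf_sum /= big1 => [|j _]; last exact/eqP/negPn/r0.
  by rewrite /monomial mcoeffUU => /eqP; rewrite oner_eq0.
have [x Qx ->] := (G_monomial (g j)).1 (Gg j).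
rewrite mcoeff_neq0 => /msuppM_le [a [b [_]]].
rewrite /monomial msuppU1 in_fset1 => /eqP -> ->.
by exists x => // t; rewrite cmM leq_addl.
Qed.

Lemma meets_ideal_genP m :
  (forall m', ideal_gen G (monomial k m') -> common_divisor m m') <->
  (forall x, Q x -> common_divisor m (F x)).
Proof.
split=> [meets x Qx | meets m' /ideal_gen_monomialP [x Qx dvd]].
  by apply: meets; apply/ideal_gen_monomialP; exists x.
have [t [mt Ft]] := meets x Qx.
by exists t; split; last exact: leq_trans Ft (dvd t).
Qed.

End GeneratedByMonomials.
End MonomialIdeals.

Section FinitePosets.
Variables (disp : Order.disp_t) (P : finPOrderType disp).
Implicit Types (p q : P) (phi alpha : {ffun P -> nat}) (I : {set P}).

Definition nbelow p := #|[set q | (q < p)%O]|.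

Lemma nbelow_lt p q : (q < p)%O -> nbelow q < nbelow p.
Proof.
move=> qp; apply/proper_card/properP; split.
  by apply/subsetP => x; rewrite !inE => /lt_trans; apply.
by exists q; rewrite !inE ?qp ?ltxx.
Qed.

Lemma nbelow_ind (R : P -> Prop) :
  (forall p, (forall q, (q < p)%O -> R q) -> R p) -> forall p, R p.
Proof.
move=> IH p; have [n] := ubnP (nbelow p); elim: n p => // n IHn p.
rewrite ltnS => le_pn; apply: IH => q qp; apply: IHn.
exact: leq_trans (nbelow_lt qp) le_pn.
Qed.

Section Greedy.
Variables (c : P -> nat -> bool) (N : nat).
Hypothesis c_ge : forall p i, N <= i -> c p i.

Lemma next_exists p x : exists i, (x <= i) && c p i.
Proof. by exists (maxn x N); rewrite leq_maxl c_ge ?leq_maxr. Qed.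

Definition next_at p x := ex_minn (next_exists p x).

Lemma next_at_ge p x : x <= next_at p x.
Proof. by rewrite /next_at; case: ex_minnP => i /andP []. Qed.

Lemma next_at_sat p x : c p (next_at p x).
Proof. by rewrite /next_at; case: ex_minnP => i /andP []. Qed.

Lemma next_at_min p x i : x <= i -> i < next_at p x -> ~~ c p i.
Proof.
rewrite /next_at; case: ex_minnP => j _ min xi.
by apply: contraTN => ci; rewrite -leqNgt min ?xi.
Qed.

Definition greedy_step (f : P -> nat) p := next_at p (\max_(q | (q < p)%O) f q).

Lemma iter_greedy_step_stable p n n' : nbelow p < n -> nbelow p < n' ->
  iter n greedy_step (fun=> 0) p = iter n' greedy_step (fun=> 0) p.
Proof.
elim/nbelow_ind: p n n' => p IH [|n] [|n'] //; rewrite !ltnS => le_pn le_pn'.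
rewrite !iterS; congr next_at; apply: eq_bigr => q qp.
by apply: (IH q qp); apply: leq_trans (nbelow_lt qp) _.
Qed.

(* [nbelow p + 1] rounds of [greedy_step] already fix the value at [p]. *)
Definition greedy : {ffun P -> nat} :=
  [ffun p => iter (nbelow p).+1 greedy_step (fun=> 0) p].

Lemma greedyE p : greedy p = next_at p (\max_(q | (q < p)%O) greedy q).
Proof.
rewrite ffunE iterS /greedy_step; congr next_at; apply: eq_bigr => q qp.
by rewrite ffunE; apply: iter_greedy_step_stable => //; apply: nbelow_lt.
Qed.

Lemma greedy_isotone : isotone greedy.
Proof.
move=> p q; rewrite le_eqVlt => /predU1P [-> //| pq].
rewrite [greedy q]greedyE; apply: leq_trans (next_at_ge _ _).
exact: leq_bigmax_cond.
Qed.

Lemma greedy_sat p : c p (greedy p).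
Proof. by rewrite greedyE next_at_sat. Qed.

Lemma greedy_ascent p i : in_ascent greedy p i -> ~~ c p i.
Proof.
case/andP => /forallP below; rewrite greedyE; apply: next_at_min.
by apply/bigmax_leqP => q qp; have /implyP := below q; apply.
Qed.

End Greedy.

Lemma le_alpha_of_ascent_free phi I alpha :
  down_closed I ->
  (forall p q, p \in I -> q \in I -> (p <= q)%O -> alpha p <= alpha q) ->
  (forall p, p \in I -> ~~ in_ascent phi p (alpha p)) ->
  forall p, p \in I -> phi p <= alpha p.
Proof.
move=> closedI alpha_iso free; elim/nbelow_ind => p IH pI.
have below : [forall q, (q < p)%O ==> (phi q <= alpha p)].
  apply/forallP => q; apply/implyP => qp; have qI := closedI p q (ltW qp) pI.
  exact: leq_trans (IH q qp qI) (alpha_iso q p qI pI (ltW qp)).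
by have := free p pI; rewrite /in_ascent below /= -leqNgt.
Qed.

Lemma isotone_extension phi I alpha :
  isotone phi ->
  (forall p q, p \in I -> q \in I -> (p <= q)%O -> alpha p <= alpha q) ->
  (forall p, p \in I -> phi p <= alpha p) ->
  exists psi, [/\ isotone psi, forall p, p \in I -> psi p = alpha p
                 & forall p, phi p <= psi p].
Proof.
move=> phi_iso alpha_iso le_phi_alpha.
pose psi := [ffun p => maxn (phi p) (\max_(q | (q \in I) && (q <= p)%O) alpha q)].
exists psi; split=> [p q pq | p pI | p]; rewrite !ffunE ?leq_maxl //.
  rewrite geq_max !leq_max phi_iso //=; apply/orP; right.
  apply/bigmax_leqP => r /andP [rI rp]; apply: leq_bigmax_cond.
  by rewrite rI (le_trans rp pq).
have -> : \max_(q | (q \in I) && (q <= p)%O) alpha q = alpha p.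
  apply/eqP; rewrite eqn_leq; apply/andP; split.
    by apply/bigmax_leqP => q /andP [qI qp]; apply: alpha_iso.
  by apply: leq_bigmax_cond; rewrite pI lexx.
exact/maxn_idPr/le_phi_alpha.
Qed.

Lemma marker_setT (J : {ffun P -> nat} -> Prop) phi :
  isotone phi -> J phi -> marker J setT phi.
Proof.
move=> phi_iso Jphi; split=> [p q _ _ | p q _ _ | psi _ ext]; rewrite ?inE //.
  exact: phi_iso.
by have -> : psi = phi by apply/ffunP => p; rewrite ext ?inE.
Qed.

Section Duality.
Variable J : {ffun P -> nat} -> Prop.
Hypothesis J_ideal : hom_ideal J.

(* Otherwise [phi <= alpha] on [I], so [phi] lies below an isotone extension
   of [alpha], which is in [J]. *)
Lemma marker_meets_ascent phi I alpha :
  isotone phi -> ~ J phi -> marker J I alpha ->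
  exists2 p, p \in I & in_ascent phi p (alpha p).
Proof.
move=> phi_iso phiNJ [closedI alpha_iso ext].
have [/existsP [p /andP [pI asc]]|] :=
  boolP [exists p, (p \in I) && in_ascent phi p (alpha p)]; first by exists p.
rewrite negb_exists => /forallP free.
have le_phi_alpha : forall p, p \in I -> phi p <= alpha p.
  apply: le_alpha_of_ascent_free => // p pI; have := free p; by rewrite pI.
have [psi [psi_iso psi_ext phi_le]] := isotone_extension phi_iso alpha_iso le_phi_alpha.
by case: phiNJ; apply: J_ideal.2 phi_iso (ext psi psi_iso psi_ext) phi_le.
Qed.

Variables (S : pred (P * nat)) (N : nat).
Hypothesis S_bounded : forall p i, S (p, i) -> i < N.

Lemma contains_ascent_iff_meets_graphs :
  (exists2 phi, isotone phi /\ ~ J phi & forall p i, in_ascent phi p i -> S (p, i)) <->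
  (forall I alpha, marker J I alpha -> exists2 p, p \in I & S (p, alpha p)).
Proof.
split=> [[phi [phi_iso phiNJ] ascS] I alpha mk | meets].
  by have [p pI /ascS] := marker_meets_ascent phi_iso phiNJ mk; exists p.
have c_ge p i : N <= i -> ~~ S (p, i).
  by move=> le_Ni; apply: contraTN le_Ni => /S_bounded; rewrite -ltnNge.
exists (greedy c_ge) => [|p i /greedy_ascent]; last by rewrite negbK.
split=> [|greedyJ]; first exact: greedy_isotone.
have [p _ Sp] := meets _ _ (marker_setT (greedy_isotone c_ge) greedyJ).
by have := greedy_sat c_ge p; rewrite Sp.
Qed.

Lemma contains_graph_iff_meets_ascents :
  (exists I alpha, marker J I alpha /\ forall p, p \in I -> S (p, alpha p)) <->
  (forall phi, isotone phi -> ~ J phi -> exists p i, in_ascent phi p i /\ S (p, i)).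
Proof.
split=> [[I [alpha [mk graphS]]] phi phi_iso phiNJ | meets].
  have [p pI asc] := marker_meets_ascent phi_iso phiNJ mk.
  by exists p, (alpha p); split; last exact: graphS.
have c_ge p i : N <= i -> S (p, i) || (N <= i) by move->; rewrite orbT.
move: (greedy c_ge) (greedy_isotone c_ge) (greedy_sat c_ge) (greedy_ascent (c_ge := c_ge)).
move=> psi psi_iso psi_sat psi_ascent.
exists [set p | psi p < N], psi; split; last first.
  by move=> p; rewrite inE => lt_psiN; have := psi_sat p; rewrite leqNgt lt_psiN orbF.
split=> [p q qp | p q _ _ | phi phi_iso phi_ext]; rewrite ?inE.
- by apply: leq_ltn_trans; apply: psi_iso.
- exact: psi_iso.
pose phi' := [ffun p => maxn (psi p) (phi p)].
have phi'_iso : isotone phi'.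
  by move=> p q pq; rewrite !ffunE geq_max !leq_max psi_iso ?phi_iso ?orbT.
suff phi'J : J phi' by apply: J_ideal.2 phi_iso phi'J _ => p; rewrite ffunE leq_maxr.
apply: NNPP => phi'NJ; have [p [i [asc Si]]] := meets phi' phi'_iso phi'NJ.
(* [phi'] agrees with [psi] where [psi < N], and [i < N]. *)
suff /psi_ascent : in_ascent psi p i by rewrite Si.
case/andP: asc => /forallP below lt_i; apply/andP; split.
  apply/forallP => q; apply/implyP => qp.
  by have /implyP/(_ qp) := below q; rewrite ffunE geq_max => /andP [].
move: lt_i; rewrite ffunE; have [lt_psiN|] := ltnP (psi p) N.
  by rewrite phi_ext ?inE // maxnn.
by move=> le_Npsi _; apply: leq_trans (S_bounded Si) le_Npsi.
Qed.

End Duality.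
End FinitePosets.

Section LetterplaceMonomials.
Variables (k : fieldType) (disp : Order.disp_t) (P : finPOrderType disp).
Variable J : {ffun P -> nat} -> Prop.
Implicit Types (m : {cmonom (P * nat)%type}) (phi alpha : {ffun P -> nat}) (I : {set P}).

Definition ascent_cm phi : {cmonom (P * nat)%type} :=
  \big[@mmul _/@mone _]_(p : P)
     \big[@mmul _/@mone _]_(i < phi p | in_ascent phi p i) ucm (p, val i).

Definition graph_cm I alpha : {cmonom (P * nat)%type} :=
  \big[@mmul _/@mone _]_(p in I) ucm (p, alpha p).

Lemma m_ascentE phi : m_ascent k phi = monomial k (ascent_cm phi).
Proof. by rewrite -monomial_prod; apply: eq_bigr => p _; apply: monomial_prod. Qed.

Lemma m_graphE I alpha : m_graph k I alpha = monomial k (graph_cm I alpha).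
Proof. exact: monomial_prod. Qed.

Lemma ascent_cmE phi p (i : nat) : ascent_cm phi (p, i) = in_ascent phi p i.
Proof.
rewrite cm_prod (bigD1 p) //= [X in _ + X]big1 => [|q /negbTE qp]; last first.
  by rewrite cm_prod big1 // => l _; rewrite cmU xpair_eqE qp.
rewrite cm_prod addn0.
rewrite (eq_bigr (fun l : 'I_(phi p) => if l == i :> nat then 1 else 0)); last first.
  by move=> l _; rewrite cmU xpair_eqE eqxx; case: eqP.
rewrite -big_mkcondr (big_ord1_cond_eq _ (fun=> 1) (in_ascent phi p)).
by case asc: (in_ascent phi p i); rewrite ?andbF // andbT; case/andP: asc => _ ->.
Qed.

Lemma graph_cmE I alpha p (i : nat) :
  graph_cm I alpha (p, i) = (p \in I) && (alpha p == i).
Proof.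
rewrite cm_prod big_mkcond (bigD1 p) //= [X in _ + X]big1 => [|q /negbTE qp].
  by case: (p \in I); rewrite ?addn0 // cmU xpair_eqE eqxx.
by case: (q \in I); rewrite // cmU xpair_eqE qp.
Qed.

Lemma ascent_cm_dvd m phi :
  cm_dvd (ascent_cm phi) m <-> forall p i, in_ascent phi p i -> 0 < m (p, i).
Proof.
split=> [dvd p i asc | ascS [p i]]; first by have := dvd (p, i); rewrite ascent_cmE asc.
by rewrite ascent_cmE; case: (boolP (in_ascent _ _ _)) => // /ascS.
Qed.

Lemma graph_cm_dvd m I alpha :
  cm_dvd (graph_cm I alpha) m <-> forall p, p \in I -> 0 < m (p, alpha p).
Proof.
split=> [dvd p pI | graphS [p i]]; first by have := dvd (p, alpha p); rewrite graph_cmE pI eqxx.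
by rewrite graph_cmE; case: (boolP (p \in I)) => //= /graphS; case: eqP => // <-.
Qed.

Lemma common_divisor_ascent_cm m phi :
  common_divisor m (ascent_cm phi) <-> exists p i, in_ascent phi p i /\ 0 < m (p, i).
Proof.
split=> [[[p i]] | [p [i [asc mpi]]]]; last by exists (p, i); rewrite ascent_cmE asc.
by rewrite ascent_cmE lt0b => -[mpi asc]; exists p, i.
Qed.

Lemma common_divisor_graph_cm m I alpha :
  common_divisor m (graph_cm I alpha) <-> exists2 p, p \in I & 0 < m (p, alpha p).
Proof.
split=> [[[p i]] | [p pI mp]]; last by exists (p, alpha p); rewrite graph_cmE pI eqxx.
by rewrite graph_cmE lt0b => -[mpi /andP [pI /eqP alpha_pi]]; exists p; rewrite ?alpha_pi.
Qed.

Lemma cm_bound_gt m p i : 0 < m (p, i) -> i < (\max_(t <- finsupp m) t.2).+1.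
Proof. by rewrite lt0n cmE_neq0 ltnS => /leq_bigmax_seq; apply. Qed.

Lemma LP_gensP f : LP_gens (k := k) J f <->
  exists2 phi, isotone phi /\ ~ J phi & f = monomial k (ascent_cm phi).
Proof.
by split=> [[phi [phi_iso [phiNJ ->]]] | [phi [phi_iso phiNJ] ->]];
  exists phi; rewrite ?m_ascentE.
Qed.

Lemma coLP_gensP f : coLP_gens (k := k) J f <->
  exists2 x, marker J x.1 x.2 & f = monomial k (graph_cm x.1 x.2).
Proof.
split=> [[I [alpha [mk ->]]] | [[I alpha] mk ->]].
  by exists (I, alpha); rewrite ?m_graphE.
by exists I, alpha; rewrite m_graphE.
Qed.

Lemma letterplace_monomialP m :
  letterplace k J (monomial k m) <->
  exists2 phi, isotone phi /\ ~ J phi & forall p i, in_ascent phi p i -> 0 < m (p, i).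
Proof.
apply: iff_trans (ideal_gen_monomialP LP_gensP m) _.
by split=> -[phi Qphi /ascent_cm_dvd]; exists phi.
Qed.

Lemma coletterplace_monomialP m :
  coletterplace k J (monomial k m) <->
  exists I alpha, marker J I alpha /\ forall p, p \in I -> 0 < m (p, alpha p).
Proof.
apply: iff_trans (ideal_gen_monomialP coLP_gensP m) _.
by split=> [[[I alpha] mk /graph_cm_dvd] | [I [alpha [mk /graph_cm_dvd]]]];
  [exists I, alpha | exists (I, alpha)].
Qed.

Lemma meets_letterplaceP m :
  (forall m', letterplace k J (monomial k m') -> common_divisor m m') <->
  (forall phi, isotone phi -> ~ J phi -> exists p i, in_ascent phi p i /\ 0 < m (p, i)).
Proof.
apply: iff_trans (meets_ideal_genP LP_gensP m) _.
split=> [meets phi phi_iso phiNJ | meets phi [phi_iso phiNJ]];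
  apply/common_divisor_ascent_cm; exact: meets.
Qed.

Lemma meets_coletterplaceP m :
  (forall m', coletterplace k J (monomial k m') -> common_divisor m m') <->
  (forall I alpha, marker J I alpha -> exists2 p, p \in I & 0 < m (p, alpha p)).
Proof.
apply: iff_trans (meets_ideal_genP coLP_gensP m) _.
split=> [meets I alpha mk | meets [I alpha] mk]; apply/common_divisor_graph_cm.
  exact: (meets (I, alpha)).
exact: meets.
Qed.

End LetterplaceMonomials.

Theorem proposition1p11 (k : fieldType) (disp : Order.disp_t) (P : finPOrderType disp)
  (J : {ffun P -> nat} -> Prop) :
  hom_ideal J ->
  (forall m : {cmonom (P * nat)%type},
     letterplace k J (monomial k m) <->
     (forall m' : {cmonom (P * nat)%type},
        coletterplace k J (monomial k m') -> common_divisor m m')) /\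
  (forall m : {cmonom (P * nat)%type},
     coletterplace k J (monomial k m) <->
     (forall m' : {cmonom (P * nat)%type},
        letterplace k J (monomial k m') -> common_divisor m m')).
Proof.
move=> J_ideal; split=> m; have supp_bounded := cm_bound_gt (m := m).
  apply: iff_trans (letterplace_monomialP _ _ m) _.
  apply: iff_trans _ (iff_sym (meets_coletterplaceP _ _ m)).
  exact: (contains_ascent_iff_meets_graphs J_ideal (S := fun t => 0 < m t) supp_bounded).
apply: iff_trans (coletterplace_monomialP _ _ m) _.
apply: iff_trans _ (iff_sym (meets_letterplaceP _ _ m)).
exact: (contains_graph_iff_meets_ascents J_ideal (S := fun t => 0 < m t) supp_bounded).
Qed.
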